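(* With $B_1,B_2,B_3,\boldsymbol y,c$ as in the context, define $A_1=B_3-B_2^{\top}B_1^{-1}B_2$, $A_2=B_4-\frac1c\boldsymbol\alpha\boldsymbol\alpha^{\top}$ and $Y=\mathrm{diag}(\boldsymbol y)-\frac1c\boldsymbol y\boldsymbol y^{\top}$. Then: (a) $A_1$ is block diagonal with $N$ diagonal blocks, each of size $(m-1)\times(m-1)$; moreover $A_1$ is positive definite and strictly diagonally dominant. (b) $A_2=(\boldsymbol 1_N\boldsymbol 1_N^{\top})\otimes Y$, and $Y$ is positive definite and strictly diagonally dominant.
   Context: Let $N\ge 1$, $m\ge 2$, $m_1,\dots,m_N\ge 1$ be integers, $M=\sum_t m_t$, $M_2=N(m-1)$, $n_{col}=mM+m$. Notation: $\boldsymbol 1_k$ all-ones vector, $\boldsymbol 0_k$ zero vector, $I_k$ identity, $\otimes$ Kronecker product. For $t=1,\dots,N$ let $F_t=I_{m_t}\otimes\boldsymbol 1_m^{\top}$, $G'_t=\boldsymbol 1_{m_t}^{\top}\otimes[\boldsymbol 0_{m-1},\ I_{m-1}]$, and $H=[\boldsymbol 0_{m-1},\ -I_{m-1}]$. With columns partitioned into blocks of sizes $mm_1,\dots,mm_N,m$, let $\bar A\in\mathbb{R}^{(M+M_2+1)\times n_{col}}$ have block rows $[\mathrm{diag}(F_1,\dots,F_N),\ 0]$, $[\mathrm{diag}(G'_1,\dots,G'_N),\ \boldsymbol 1_N\otimes H]$, $[0,\dots,0,\ \boldsymbol 1_m^{\top}]$. Let $\boldsymbol d\in\mathbb{R}^{n_{col}}$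 have positive entries, $D=\mathrm{diag}(\boldsymbol d)$, $\boldsymbol y$ the vector of the last $m-1$ entries of $\boldsymbol d$, $c$ the sum of the last $m$ entries of $\boldsymbol d$, $B_4=(\boldsymbol 1_N\boldsymbol 1_N^{\top})\otimes\mathrm{diag}(\boldsymbol y)$, $\boldsymbol\alpha=-\boldsymbol 1_N\otimes\boldsymbol y$. Partition $\bar AD\bar A^{\top}$ into $3\times3$ blocks of row/column sizes $M,M_2,1$; let $B_1$ be the $(1,1)$ block, $B_2$ the $(1,2)$ block, and $B_3$ the $(2,2)$ block minus $B_4$. (It is known that $B_1,B_3$ are diagonal with positive diagonal, $B_2$ is block diagonal with blocks of size $m_t\times(m-1)$, the $(2,3)$ block is $\boldsymbol\alpha$, the $(1,3)$ block is $0$ and the $(3,3)$ entry is $c$.) *)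

From HB Require Import structures.
From mathcomp Require Import all_boot all_order all_algebra.
Set Implicit Arguments. Unset Strict Implicit. Unset Printing Implicit Defensive.
Import Order.TTheory GRing.Theory Num.Theory.
Local Open Scope ring_scope.

Lemma kron_div_lt (a b : nat) (i : 'I_(a * b)) : (i %/ b < a)%N.
Proof.
case: i; case: b => [|b] i Hi /=; first by rewrite muln0 in Hi.
by rewrite ltn_divLR.
Qed.

Lemma kron_mod_lt (a b : nat) (i : 'I_(a * b)) : (i %% b < b)%N.
Proof.
case: i; case: b => [|b] i Hi /=; first by rewrite muln0 in Hi.
by rewrite ltn_pmod.
Qed.

Lemma sum_const_ord (N k : nat) : (\sum_(t < N) k)%N = (N * k)%N.
Proof. by rewrite sum_nat_const card_ord. Qed.

Lemma succ_lt_of_lt_pred (m : nat) (j : 'I_(m - 1)) : (j.+1 < m)%N.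
Proof. by have := ltn_ord j; rewrite ltn_subRL addnC addn1. Qed.

(* ---------- Kronecker product (standard row-major ordering):
   (A ⊗ B)_{(i1*m2+i2),(j1*n2+j2)} = A_{i1 j1} * B_{i2 j2} ---------- *)
Definition kron {R : pzRingType} {m1 n1 m2 n2 : nat}
  (A : 'M[R]_(m1, n1)) (B : 'M[R]_(m2, n2)) : 'M[R]_(m1 * m2, n1 * n2) :=
  \matrix_(i, j)
    (A (Ordinal (kron_div_lt i)) (Ordinal (kron_div_lt j)) *
     B (Ordinal (kron_mod_lt i)) (Ordinal (kron_mod_lt j))).

(* all-ones matrix ( 1_k is ones k 1, 1_k^T is ones 1 k ) *)
Definition ones {R : pzRingType} (r c : nat) : 'M[R]_(r, c) := const_mx 1.

Definition bdiag {R : pzRingType} {N : nat} {p_ q_ : 'I_N -> nat}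
  (B_ : forall t, 'M[R]_(p_ t, q_ t)) : 'M[R]_(\sum_t p_ t, \sum_t q_ t) :=
  mxblock (fun j k => if j == k then conform_mx 0 (B_ j) else 0).

Definition posdef {R : realFieldType} {n : nat} (A : 'M[R]_n) : Prop :=
  A^T = A /\ forall x : 'cV[R]_n, x != 0 -> 0 < (x^T *m A *m x) 0 0.

Definition sdd {R : realFieldType} {n : nat} (A : 'M[R]_n) : Prop :=
  forall i : 'I_n, \sum_(j < n | j != i) `|A i j| < `|A i i|.

Section Data.
Variables (R : realFieldType) (N m : nat) (mt : 'I_N -> nat).

Definition Msum : nat := (\sum_(t < N) mt t)%N.
Definition Mtwo : nat := (N * (m - 1))%N.
Definition Scol : nat := (\sum_(t < N) (mt t * m))%N.

(* [0_{m-1}, I_{m-1}] *)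
Definition ZI : 'M[R]_(m - 1, m) := \matrix_(i, j) ((j : nat) == i.+1)%:R.
Definition Hmat : 'M[R]_(m - 1, m) := - ZI.

Definition Fblk (t : 'I_N) : 'M[R]_(mt t, mt t * m) :=
  castmx (muln1 (mt t), erefl) (kron (1%:M : 'M[R]_(mt t)) (ones 1 m)).
Definition Gblk (t : 'I_N) : 'M[R]_(m - 1, mt t * m) :=
  castmx (mul1n (m - 1)%N, erefl) (kron (ones 1 (mt t)) ZI).

Definition Abar : 'M[R]_(Msum + Mtwo + 1, Scol + m) :=
  col_mx
    (col_mx
       (row_mx (bdiag Fblk) 0)
       (row_mx (castmx (sum_const_ord N (m - 1)%N, erefl) (bdiag Gblk))
               (castmx (erefl, mul1n m) (kron (ones N 1) Hmat))))
    (row_mx 0 (ones 1 m)).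

Variable d : 'cV[R]_(Scol + m).

Definition Dmat : 'M[R]_(Scol + m) := diag_mx d^T.
Definition Pmat : 'M[R]_(Msum + Mtwo + 1) := Abar *m Dmat *m Abar^T.

Definition B1 : 'M[R]_Msum := ulsubmx (ulsubmx Pmat).
Definition B2 : 'M[R]_(Msum, Mtwo) := ursubmx (ulsubmx Pmat).
Definition P22 : 'M[R]_Mtwo := drsubmx (ulsubmx Pmat).

(* y = last m-1 entries of d ; c = sum of last m entries of d *)
Definition yvec : 'cV[R]_(m - 1) :=
  \col_j d (rshift Scol (Ordinal (succ_lt_of_lt_pred j))) 0.
Definition cc : R := \sum_(j < m) d (rshift Scol j) 0.

Definition B4 : 'M[R]_Mtwo := kron (ones N N) (diag_mx yvec^T).
Definition B3 : 'M[R]_Mtwo := P22 - B4.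
Definition alpha : 'M[R]_(Mtwo, 1 * 1) := - kron (ones N 1) yvec.

Definition A1 : 'M[R]_Mtwo := B3 - B2^T *m invmx B1 *m B2.
Definition A2 : 'M[R]_Mtwo := B4 - cc^-1 *: (alpha *m alpha^T).
Definition Ymat : 'M[R]_(m - 1) := diag_mx yvec^T - cc^-1 *: (yvec *m yvec^T).

End Data.

From HB Require Import structures.
From mathcomp Require Import all_boot all_order all_algebra.
From mathcomp Require Import ring lra.
Set Implicit Arguments. Unset Strict Implicit. Unset Printing Implicit Defensive.
Import Order.TTheory GRing.Theory Num.Theory.
Local Open Scope ring_scope.

(* Both A1 and Y have the shape  diag(1^T B) - B^T diag(b)^-1 B  (here
   [schur_colsum B b]) with B >= 0, every column of B containing a positive
   entry, and every row sum of B strictly below the matching b_i.  Such a matrix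
   is symmetric, and in column j its diagonal entry exceeds the sum of the
   absolute off-diagonal entries by  sum_i B_ij (1 - (sum_j' B_ij') / b_i) > 0;
   strict diagonal dominance with a positive diagonal gives positive
   definiteness.  For Y take B = y^T and b = c, the first of the last m entries
   of d accounting for the slack.  For A1 take B = B2 and b = diag B1: reading
   off Abar D Abar^T, B1 is diagonal with entries sum_y d_(t,k,y), B3 is
   diagonal with the column sums of B2, and B2 has a single block of nonzero
   entries per column block, which also makes A1 block diagonal. *)

Lemma sum_ordsum (V : nmodType) n (p_ : 'I_n -> nat) (F : 'I_(\sum_i p_ i) -> V) :
  \sum_s F s = \sum_t \sum_(a < p_ t) F (tagnat.Rank t a).
Proof.
rewrite (reindex (@tagnat.rank n p_)); last exact: tagnat.rank_bij_on.
by rewrite sig_big_dep; apply: eq_bigr => -[t a].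
Qed.

Lemma sum_sigma_only1 (V : nmodType) n (p_ : 'I_n -> nat)
    (G : forall t, 'I_(p_ t) -> V) t (k : 'I_(p_ t)) :
  (forall u (x : 'I_(p_ u)), ~~ ((t == u) && (k == x :> nat)) -> G u x = 0) ->
  \sum_u \sum_x G u x = G t k.
Proof.
move=> G0; rewrite (big_only1 t) // => [|u neq_ut _]; last first.
  by apply: big1 => x _; rewrite G0 // eq_sym (negPf neq_ut).
rewrite (big_only1 k) // => x neq_xk _.
by rewrite G0 // eqxx eq_sym val_eqE neq_xk.
Qed.

Section BlockDiagonal.
Variables (R : pzRingType) (N : nat) (p_ q_ : 'I_N -> nat).
Variable B_ : forall t, 'M[R]_(p_ t, q_ t).

Lemma bdiag_Rank t (a : 'I_(p_ t)) (b : 'I_(q_ t)) :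
  bdiag B_ (tagnat.Rank t a) (tagnat.Rank t b) = B_ t a b.
Proof.
rewrite /bdiag /mxblock mxE.
move: (tagnat.Rank2K a) (tagnat.Rank2K b).
move: (tagnat.sig2 (tagnat.Rank t a)) (tagnat.sig2 (tagnat.Rank t b)).
move: (tagnat.Rank1K a) (tagnat.Rank1K b).
move: (tagnat.sig1 (tagnat.Rank t a)) (tagnat.sig1 (tagnat.Rank t b)).
move=> u v eu ev; subst u v => a' b' -> ->.
by rewrite eqxx conform_mx_id !cast_ord_id.
Qed.

Lemma bdiag_Rank_neq t u (a : 'I_(p_ t)) (b : 'I_(q_ u)) :
  t != u -> bdiag B_ (tagnat.Rank t a) (tagnat.Rank u b) = 0.
Proof.
move=> neq_tu; rewrite /bdiag /mxblock mxE.
have -> : (tagnat.sig1 (tagnat.Rank t a) == tagnat.sig1 (tagnat.Rank u b)) = false.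
  by rewrite !tagnat.Rank1K (negPf neq_tu).
by rewrite mxE.
Qed.

End BlockDiagonal.

Section KroneckerIndex.
Variables a b : nat.

Definition kdiv (i : 'I_(a * b)) : 'I_a := Ordinal (kron_div_lt i).
Definition kmod (i : 'I_(a * b)) : 'I_b := Ordinal (kron_mod_lt i).

Lemma kpair_lt (x : 'I_a) (y : 'I_b) : (x * b + y < a * b)%N.
Proof.
case: x y => x lt_xa [y lt_yb] /=.
apply: (@leq_trans (x * b + b)); first by rewrite ltn_add2l.
by rewrite addnC -mulSn leq_mul2r lt_xa orbT.
Qed.

Definition kpair (x : 'I_a) (y : 'I_b) : 'I_(a * b) := Ordinal (kpair_lt x y).

Lemma kdiv_kpair x y : kdiv (kpair x y) = x.
Proof.
apply: val_inj; case: x y => x lt_xa [y lt_yb] /=.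
by rewrite divnMDl ?divn_small ?addn0 // (leq_ltn_trans _ lt_yb).
Qed.

Lemma kmod_kpair x y : kmod (kpair x y) = y.
Proof. by apply: val_inj; case: x y => x ? [y ?] /=; rewrite modnMDl modn_small. Qed.

Lemma kpairK (i : 'I_(a * b)) : kpair (kdiv i) (kmod i) = i.
Proof. by apply: val_inj; rewrite /= -divn_eq. Qed.

Lemma sum_kpair (V : nmodType) (F : 'I_(a * b) -> V) :
  \sum_i F i = \sum_(x < a) \sum_(y < b) F (kpair x y).
Proof.
rewrite pair_big (reindex (fun p : 'I_a * 'I_b => kpair p.1 p.2)) //=.
exists (fun i => (kdiv i, kmod i)) => [[x y] _|i _] /=.
  by rewrite kdiv_kpair kmod_kpair.
exact: kpairK.
Qed.

End KroneckerIndex.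

Lemma kronE (R : pzRingType) m1 n1 m2 n2 (A : 'M[R]_(m1, n1)) (B : 'M[R]_(m2, n2)) i j :
  kron A B i j = A (kdiv i) (kdiv j) * B (kmod i) (kmod j).
Proof. by rewrite mxE. Qed.

Lemma cast_sum_const_ord N k (j : 'I_(N * k)) :
  cast_ord (esym (sum_const_ord N k)) j = @tagnat.Rank N (fun=> k) (kdiv j) (kmod j).
Proof.
have sum_lt (t : 'I_N) : (\sum_(s < N | (s < t)%N) k)%N = (t * k)%N.
  rewrite -(big_ord_widen_cond N xpredT (fun=> k)) /=; last exact: ltnW.
  by rewrite sum_const_ord.
by apply: val_inj; rewrite [RHS]tagnat.RankEsum sum_lt /= -divn_eq.
Qed.

Definition succ_ord m (j : 'I_(m - 1)) : 'I_m := Ordinal (succ_lt_of_lt_pred j).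

Lemma succ_ord_inj m : injective (@succ_ord m).
Proof. by move=> j j' /(congr1 val) [/val_inj]. Qed.

Lemma sum_ord_succ (V : nmodType) m (m_gt0 : (0 < m)%N) (F : 'I_m -> V) :
  \sum_(i < m) F i = F (Ordinal m_gt0) + \sum_(j < m - 1) F (succ_ord j).
Proof.
case: m m_gt0 F => // m m_gt0 F; rewrite big_ord_recl.
congr (_ + _); first by congr F; apply: val_inj.
rewrite [RHS](reindex (cast_ord (esym (subn1 m.+1)))); last first.
  by exists (cast_ord (subn1 m.+1)) => j _; rewrite ?cast_ordK ?cast_ordKV.
by apply: eq_bigr => j _; congr F; apply: val_inj.
Qed.

Lemma psumr_gt0 (R : realFieldType) (I : finType) (i0 : I) (F : I -> R) :
  (forall i, 0 <= F i) -> 0 < F i0 -> 0 < \sum_i F i.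
Proof.
move=> F_ge0 Fi0_gt0; rewrite lt_def sumr_ge0 // andbT psumr_neq0 //.
by apply/hasP; exists i0; rewrite ?mem_index_enum.
Qed.

Section PosdefSdd.
Variables (R : realFieldType) (n : nat).

Lemma quad_formE (A : 'M[R]_n) (x : 'cV[R]_n) :
  (x^T *m A *m x) 0 0 = \sum_i \sum_j x i 0 * A i j * x j 0.
Proof.
rewrite mxE exchange_big; apply: eq_bigr => j _.
by rewrite mxE mulr_suml; apply: eq_bigr => i _; rewrite mxE.
Qed.

Lemma sum_offdiag_tr (G : 'I_n -> 'I_n -> R) :
  \sum_i \sum_(j | j != i) G i j = \sum_i \sum_(j | j != i) G j i.
Proof.
under eq_bigr => i _ do rewrite big_mkcond.
rewrite exchange_big; apply: eq_bigr => i _.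
by rewrite [RHS]big_mkcond; apply: eq_bigr => j _; rewrite eq_sym.
Qed.

Lemma quad_form_ge_sdd (A : 'M[R]_n) (y : 'I_n -> R) : A^T = A ->
  \sum_i (A i i - \sum_(j | j != i) `|A i j|) * y i ^+ 2 <=
  \sum_i \sum_j y i * A i j * y j.
Proof.
move=> A_sym.
have cross i j : - (`|A i j| * y i ^+ 2 + `|A i j| * y j ^+ 2) / 2 <= y i * A i j * y j.
  have [Aij_ge0|Aij_lt0] := lerP 0 (A i j).
    rewrite ger0_norm //.
    have : 0 <= A i j * (y i + y j) ^+ 2 by rewrite mulr_ge0 ?sqr_ge0.
    nra.
  rewrite ltr0_norm //.
  have : 0 <= - A i j * (y i - y j) ^+ 2 by rewrite mulr_ge0 ?sqr_ge0 ?oppr_ge0 ?ltW.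
  nra.
set S1 := \sum_i \sum_(j | j != i) `|A i j| * y i ^+ 2.
set S2 := \sum_i \sum_(j | j != i) `|A i j| * y j ^+ 2.
have S21 : S2 = S1.
  rewrite /S2 sum_offdiag_tr; apply: eq_bigr => i _; apply: eq_bigr => j _.
  by rewrite -[in A j i]A_sym mxE.
have off : - (S1 + S2) / 2 <= \sum_i \sum_(j | j != i) y i * A i j * y j.
  rewrite -big_split -sumrN mulr_suml; apply: ler_sum => i _.
  by rewrite -big_split -sumrN mulr_suml; apply: ler_sum => j _; apply: cross.
have -> : \sum_i (A i i - \sum_(j | j != i) `|A i j|) * y i ^+ 2 =
          \sum_i A i i * y i ^+ 2 - S1.
  by rewrite -sumrB; apply: eq_bigr => i _; rewrite mulrBl mulr_suml.
have -> : \sum_i \sum_j y i * A i j * y j = \sum_i A i i * y i ^+ 2 +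
          \sum_i \sum_(j | j != i) y i * A i j * y j.
  rewrite -big_split; apply: eq_bigr => i _.
  by rewrite (bigD1 i) //= mulrAC -expr2 mulrC.
rewrite S21 in off; lra.
Qed.

Lemma sdd_posdef (A : 'M[R]_n) :
  A^T = A -> (forall i, 0 < A i i) -> sdd A -> posdef A.
Proof.
move=> A_sym A_diag_gt0 A_sdd; split => // x x_neq0.
have [i xi_neq0] : exists i, x i 0 != 0.
  apply/existsP; apply: contraR x_neq0 => /existsPn x0.
  by apply/eqP/matrixP => i j; rewrite ord1 mxE; apply/eqP/negPn/x0.
have rad_gt0 k : 0 < A k k - \sum_(j | j != k) `|A k j|.
  by rewrite -[A k k]ger0_norm ?ltW // subr_gt0 A_sdd.
rewrite quad_formE; apply: lt_le_trans (quad_form_ge_sdd (fun i => x i 0) A_sym).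
apply: (psumr_gt0 (i0 := i)) => [k|].
  by rewrite mulr_ge0 ?sqr_ge0 ?ltW ?rad_gt0.
by rewrite mulr_gt0 ?rad_gt0 ?exprn_even_gt0.
Qed.

End PosdefSdd.

Lemma invmx_diag (R : fieldType) n (e : 'rV[R]_n) : (forall i, e 0 i != 0) ->
  invmx (diag_mx e) = diag_mx (\row_i (e 0 i)^-1).
Proof.
move=> e_neq0; set e' := diag_mx (\row_i _).
have eK : diag_mx e *m e' = 1%:M.
  rewrite mulmx_diag -diag_const_mx; congr diag_mx.
  by apply/rowP => i; rewrite !mxE mulfV.
have [e_unit _] := mulmx1_unit eK.
by rewrite -[invmx _]mulmx1 -eK mulmxA mulVmx // mul1mx.
Qed.

Section SchurColsum.
Variables (R : realFieldType) (p n : nat) (B : 'M[R]_(p, n)) (b : 'I_p -> R).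

Definition schur_colsum : 'M[R]_n :=
  \matrix_(j, j') ((j == j')%:R * \sum_i B i j - \sum_i B i j * B i j' / b i).

Lemma schur_colsum_sym : schur_colsum^T = schur_colsum.
Proof.
apply/matrixP => j j'; rewrite !mxE eq_sym; congr (_ - _); last first.
  by apply: eq_bigr => i _; rewrite (mulrC (B i j)).
by have [->|] := eqVneq j' j; rewrite ?mul0r.
Qed.

Lemma schur_colsum_eq0 j j' : j != j' -> (forall i, B i j * B i j' = 0) ->
  schur_colsum j j' = 0.
Proof.
move=> neq_jj' disj; rewrite mxE (negPf neq_jj') mul0r sub0r big1 ?oppr0 //.
by move=> i _; rewrite disj mul0r.
Qed.

Hypothesis B_ge0 : forall i j, 0 <= B i j.

Lemma schur_colsum_margin j : (forall i, 0 < b i) ->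
  schur_colsum j j - \sum_(j' | j' != j) `|schur_colsum j j'| =
  \sum_i B i j * (1 - (\sum_j' B i j') / b i).
Proof.
move=> b_gt0; pose T j' := \sum_i B i j * B i j' / b i.
have offE j' : j' != j -> `|schur_colsum j j'| = T j'.
  move=> neq_j'j; rewrite mxE eq_sym (negPf neq_j'j) mul0r sub0r normrN.
  rewrite ger0_norm //; apply: sumr_ge0 => i _.
  by rewrite divr_ge0 ?mulr_ge0 // ltW.
rewrite (eq_bigr T) // mxE eqxx mul1r -/(T j) -addrA -opprD.
rewrite [T j + _](_ : _ = \sum_j' T j'); last by rewrite [RHS](bigD1 j).
rewrite /T exchange_big -sumrB; apply: eq_bigr => i _.
by rewrite -mulr_suml -mulr_sumr mulrBr mulr1 mulrA.
Qed.

Lemma schur_colsum_posdef_sdd :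
  (forall i, \sum_j B i j < b i) -> (forall j, exists i, 0 < B i j) ->
  posdef schur_colsum /\ sdd schur_colsum.
Proof.
move=> rowsum_lt col_pos.
have b_gt0 i : 0 < b i.
  exact: le_lt_trans (sumr_ge0 _ (fun j _ => B_ge0 i j)) (rowsum_lt i).
have margin_gt0 j : 0 < schur_colsum j j - \sum_(j' | j' != j) `|schur_colsum j j'|.
  have [i0 Bi0_gt0] := col_pos j.
  rewrite schur_colsum_margin //; apply: (psumr_gt0 (i0 := i0)) => [i|].
    by rewrite mulr_ge0 // subr_ge0 ler_pdivrMr // mul1r ltW.
  by rewrite mulr_gt0 // subr_gt0 ltr_pdivrMr // mul1r.
have diag_gt0 j : 0 < schur_colsum j j.
  apply: lt_le_trans (margin_gt0 j) _; rewrite lerBlDr lerDl.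
  exact: sumr_ge0.
have G_sdd : sdd schur_colsum.
  by move=> j; rewrite ger0_norm ?ltW // -subr_gt0.
by split => //; apply: sdd_posdef => //; apply: schur_colsum_sym.
Qed.

End SchurColsum.

Section Entries.
Variables (R : realFieldType) (N m : nat) (mt : 'I_N -> nat).
Variable d : 'cV[R]_(Scol m mt + m).

Definition rowF t (k : 'I_(mt t)) : 'I_(Msum mt + Mtwo N m + 1) :=
  lshift 1 (lshift (Mtwo N m) (tagnat.Rank t k : 'I_(Msum mt))).
Definition rowG (j : 'I_(Mtwo N m)) : 'I_(Msum mt + Mtwo N m + 1) :=
  lshift 1 (rshift (Msum mt) j).
Definition colT u (x : 'I_(mt u)) (y : 'I_m) : 'I_(Scol m mt + m) :=
  lshift m (@tagnat.Rank N (fun t => mt t * m)%N u (kpair x y)).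
Definition colL (l : 'I_m) : 'I_(Scol m mt + m) := rshift (Scol m mt) l.
Arguments rowF : clear implicits. Arguments colT : clear implicits.

Local Notation Abar := (Abar R m mt).

Lemma Abar_rowF_colT t k u x y :
  Abar (rowF t k) (colT u x y) = ((t == u) && (k == x :> nat))%:R.
Proof.
rewrite /Abar /rowF /colT !col_mxEu row_mxEl.
have [eq_tu|neq_tu] := eqVneq t u; last by rewrite bdiag_Rank_neq.
subst u.
rewrite bdiag_Rank /Fblk castmxE kronE /ones !mxE mulr1 /= cast_ord_id kdiv_kpair.
by rewrite -val_eqE /= divn1.
Qed.

Lemma Abar_rowF_colL t k l : Abar (rowF t k) (colL l) = 0.
Proof. by rewrite /Abar /rowF /colL !col_mxEu row_mxEr mxE. Qed.

Lemma Abar_rowG_colT j u x y :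
  Abar (rowG j) (colT u x y) = ((kdiv j == u) && (y == succ_ord (kmod j)))%:R.
Proof.
rewrite /Abar /rowG /colT col_mxEu col_mxEd row_mxEl castmxE.
rewrite cast_sum_const_ord cast_ord_id.
have [eq_ju|neq_ju] := eqVneq (kdiv j) u; last by rewrite bdiag_Rank_neq.
subst u.
rewrite bdiag_Rank /Gblk castmxE kronE /ones !mxE mul1r /=.
by rewrite modnMDl modn_small // modn_mod -val_eqE.
Qed.

Lemma Abar_rowG_colL j l : Abar (rowG j) (colL l) = - (l == succ_ord (kmod j))%:R.
Proof.
rewrite /Abar /rowG /colL col_mxEu col_mxEd row_mxEr castmxE kronE /ones mxE.
by rewrite mul1r /Hmat /ZI !mxE /= modn_small // -val_eqE.
Qed.

Lemma PmatE i i' : Pmat d i i' =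
  \sum_u \sum_x \sum_y Abar i (colT u x y) * d (colT u x y) 0 * Abar i' (colT u x y)
  + \sum_l Abar i (colL l) * d (colL l) 0 * Abar i' (colL l).
Proof.
rewrite /Pmat /Dmat mul_mx_diag !mxE big_split_ord /=.
congr (_ + _); last by apply: eq_bigr => l _; rewrite !mxE.
rewrite (@sum_ordsum _ N (fun t => mt t * m)%N).
apply: eq_bigr => u _; rewrite sum_kpair; apply: eq_bigr => x _.
by apply: eq_bigr => y _; rewrite !mxE.
Qed.

Lemma B1_Rank t k t' k' :
  B1 d (tagnat.Rank t k) (tagnat.Rank t' k') =
  ((t == t') && (k == k' :> nat))%:R * \sum_y d (colT t k y) 0.
Proof.
have -> : B1 d (tagnat.Rank t k) (tagnat.Rank t' k') = Pmat d (rowF t k) (rowF t' k').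
  by rewrite /B1 !mxE.
rewrite PmatE [X in _ + X]big1 ?addr0 => [|l _]; last by rewrite Abar_rowF_colL !mul0r.
rewrite (@sum_sigma_only1 _ _ _ _ t k) => [|u x neq]; last first.
  by apply: big1 => y _; rewrite Abar_rowF_colT (negPf neq) !mul0r.
rewrite mulr_sumr; apply: eq_bigr => y _.
by rewrite !Abar_rowF_colT !eqxx mul1r mulrC (eq_sym t) (eq_sym (k : nat)).
Qed.

Lemma B2_Rank t k j :
  B2 d (tagnat.Rank t k) j = (kdiv j == t)%:R * d (colT t k (succ_ord (kmod j))) 0.
Proof.
have -> : B2 d (tagnat.Rank t k) j = Pmat d (rowF t k) (rowG j) by rewrite /B2 !mxE.
rewrite PmatE [X in _ + X]big1 ?addr0 => [|l _]; last by rewrite Abar_rowF_colL !mul0r.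
rewrite (@sum_sigma_only1 _ _ _ _ t k) => [|u x neq]; last first.
  by apply: big1 => y _; rewrite Abar_rowF_colT (negPf neq) !mul0r.
rewrite (big_only1 (succ_ord (kmod j))) // => [|y neq_y _]; last first.
  by rewrite Abar_rowG_colT (negPf neq_y) andbF mulr0.
by rewrite Abar_rowF_colT Abar_rowG_colT !eqxx andbT mul1r mulrC andbT.
Qed.

Lemma B3E j j' :
  B3 d j j' = (j == j')%:R * \sum_x d (colT (kdiv j) x (succ_ord (kmod j))) 0.
Proof.
have last_block : \sum_l Abar (rowG j) (colL l) * d (colL l) 0 * Abar (rowG j') (colL l)
    = B4 d j j'.
  rewrite (big_only1 (succ_ord (kmod j))) // => [|l neq_l _]; last first.
    by rewrite Abar_rowG_colL (negPf neq_l) oppr0 !mul0r.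
  rewrite !Abar_rowG_colL eqxx /B4 kronE /ones !mxE mul1r.
  by rewrite mulr1n mulN1r mulNr mulrN opprK (inj_eq (@succ_ord_inj m)) mulr_natr.
have -> : B3 d j j' = Pmat d (rowG j) (rowG j') - B4 d j j' by rewrite /B3 /P22 !mxE.
rewrite PmatE last_block addrK.
have [<-|neq_jj'] := eqVneq j j'.
  rewrite mul1r (big_only1 (kdiv j)) // => [|u neq_u _]; last first.
    apply: big1 => x _; apply: big1 => y _.
    by rewrite Abar_rowG_colT eq_sym (negPf neq_u) !mul0r.
  apply: eq_bigr => x _; rewrite (big_only1 (succ_ord (kmod j))) // => [|y neq_y _].
    by rewrite Abar_rowG_colT !eqxx mul1r mulr1.
  by rewrite Abar_rowG_colT (negPf neq_y) andbF !mul0r.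
rewrite mul0r; apply: big1 => u _; apply: big1 => x _; apply: big1 => y _.
rewrite !Abar_rowG_colT.
have [/andP[/eqP ju /eqP yj]|] := boolP ((kdiv j == u) && (y == succ_ord (kmod j)));
  last by rewrite !mul0r.
have [/andP[/eqP j'u /eqP yj']|] := boolP ((kdiv j' == u) && (y == succ_ord (kmod j')));
  last by rewrite mulr0.
case/eqP: neq_jj'; rewrite -[j]kpairK -[j']kpairK ju j'u.
by move: yj'; rewrite yj => /succ_ord_inj ->.
Qed.

Lemma B1_diag : B1 d = diag_mx (\row_i B1 d i i).
Proof.
apply/matrixP => i i'; rewrite [RHS]mxE [in RHS]mxE.
rewrite -(tagnat.sig2K i) -(tagnat.sig2K i') !B1_Rank.
by rewrite -tagnat.eq_Rank val_eqE !eqxx mul1r mulr_natl.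
Qed.

Lemma B2_colsum j : \sum_i B2 d i j = \sum_x d (colT (kdiv j) x (succ_ord (kmod j))) 0.
Proof.
rewrite (@sum_ordsum _ N mt) (big_only1 (kdiv j)) // => [|t neq_t _].
  by apply: eq_bigr => k _; rewrite B2_Rank eqxx mul1r.
by apply: big1 => k _; rewrite B2_Rank eq_sym (negPf neq_t) mul0r.
Qed.

Lemma B2_block i j j' : kdiv j != kdiv j' -> B2 d i j * B2 d i j' = 0.
Proof.
move=> neq_jj'; rewrite -(tagnat.sig2K i) !B2_Rank.
set t := tagnat.sig1 i.
case: (eqVneq (kdiv j) t) => [eq_jt|_]; last by rewrite !mul0r.
by move: neq_jj'; rewrite eq_jt eq_sym => /negPf->; rewrite mul0r mulr0.
Qed.

Lemma A2_kron : A2 d = kron (ones N N) (Ymat d).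
Proof.
apply/matrixP => j j'; rewrite /A2 /Ymat /B4 /alpha !mxE !big_ord1 !mxE.
by rewrite !mul1r mulrNN.
Qed.

Lemma Ymat_schur : Ymat d = schur_colsum (yvec d)^T (fun=> cc d).
Proof.
apply/matrixP => j j'; rewrite /Ymat !mxE !big_ord1 !mxE mulr_natl.
by congr (_ - _); rewrite mulrC.
Qed.

Hypothesis d_gt0 : forall c, 0 < d c 0.

Lemma B2_ge0 i j : 0 <= B2 d i j.
Proof. by rewrite -(tagnat.sig2K i) B2_Rank mulr_ge0 ?ler0n ?ltW. Qed.

Lemma B2_col_gt0 : (forall t, 0 < mt t)%N -> forall j, exists i, 0 < B2 d i j.
Proof.
move=> mt_gt0 j; exists (tagnat.Rank (kdiv j) (Ordinal (mt_gt0 (kdiv j)))).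
by rewrite B2_Rank eqxx mul1r.
Qed.

Hypothesis m_gt0 : (0 < m)%N.

Lemma B2_rowsum_lt i : \sum_j B2 d i j < B1 d i i.
Proof.
rewrite -(tagnat.sig2K i) B1_Rank !eqxx mul1r (sum_ord_succ m_gt0).
set t := tagnat.sig1 i; set k := tagnat.sig2 i.
rewrite sum_kpair (big_only1 t) // => [|u neq_u _]; last first.
  by apply: big1 => y _; rewrite B2_Rank kdiv_kpair (negPf neq_u) mul0r.
under eq_bigr => y _ do rewrite B2_Rank kdiv_kpair kmod_kpair eqxx mul1r.
by rewrite ltrDr.
Qed.

Lemma B1_diag_gt0 i : 0 < B1 d i i.
Proof. exact: le_lt_trans (sumr_ge0 _ (fun j _ => B2_ge0 i j)) (B2_rowsum_lt i). Qed.

Lemma A1_schur : A1 d = schur_colsum (B2 d) (fun i => B1 d i i).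
Proof.
rewrite /A1 [in LHS]B1_diag invmx_diag => [|i]; last by rewrite mxE gt_eqF ?B1_diag_gt0.
apply/matrixP => j j'; rewrite mxE [in RHS]mxE B3E -B2_colsum mxE mul_mx_diag mxE.
by congr (_ - _); apply: eq_bigr => i _; rewrite !mxE mulrAC.
Qed.

Lemma yvec_gt0 j : 0 < (yvec d)^T 0 j.
Proof. by rewrite !mxE. Qed.

Lemma yvec_sum_lt : \sum_j (yvec d)^T 0 j < cc d.
Proof.
rewrite /cc (sum_ord_succ m_gt0) [X in _ < _ + X](eq_bigr (fun j => (yvec d)^T 0 j)).
  by rewrite ltrDr.
by move=> j _; rewrite !mxE.
Qed.

End Entries.

Theorem lemma3 (R : realFieldType) (N m : nat) (mt : 'I_N -> nat)
  (d : 'cV[R]_(Scol m mt + m)) :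
  (0 < N)%N -> (2 <= m)%N -> (forall t, 0 < mt t)%N ->
  (forall i, 0 < d i 0) ->
  (* (a) *)
  ((forall i j : 'I_(Mtwo N m), (i %/ (m - 1))%N != (j %/ (m - 1))%N ->
      A1 d i j = 0)
   /\ posdef (A1 d) /\ sdd (A1 d))
  /\
  (* (b) *)
  (A2 d = kron (ones N N) (Ymat d) /\ posdef (Ymat d) /\ sdd (Ymat d)).
Proof.
move=> _ m_ge2 mt_gt0 d_gt0.
have m_gt0 : (0 < m)%N by apply: ltnW.
rewrite (A1_schur d_gt0 m_gt0) A2_kron Ymat_schur.
split; [split|split=> //].
- move=> j j' neq_jj'; apply: schur_colsum_eq0 => [|i].
    by apply: contra neq_jj' => /eqP ->.
  exact: B2_block.
- apply: schur_colsum_posdef_sdd.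
  + exact: B2_ge0.
  + exact: B2_rowsum_lt.
  + exact: B2_col_gt0.
- apply: schur_colsum_posdef_sdd => [i j|i|j]; rewrite ?ord1.
  + exact/ltW/yvec_gt0.
  + exact: yvec_sum_lt.
  + by exists 0; apply: yvec_gt0.
Qed.
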